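(* Let $G$ be a finite transitive permutation group, let $p$ be a prime, and suppose that a point stabiliser $H=G_\alpha$ contains a quasi-semiregular $p$-element. Then: (1) $H$ contains a Sylow $p$-subgroup of $G$; (2) if $S$ is a Sylow $p$-subgroup of $G$ contained in $H$, then $N_G(S)\le N_G(H)$; (3) if moreover $N_G(H)=H$, then $N_G(S)=N_H(S)$.
   Context: A permutation $g$ is quasi-semiregular if $\langle g\rangle$ has a unique fixed point and acts semiregularly (only the identity fixes a point) on the remaining points. *)

From mathcomp Require Import all_boot all_fingroup all_solvable.
Local Open Scope group_scope.
Set Implicit Arguments. Unset Strict Implicit. Unset Printing Implicit Defensive.

Definition quasi_semiregular (T : finType) (g : {perm T}) : Prop :=
  exists a : T,
    (forall x : T, (forall h, h \in <[g]> -> h x = x) <-> x = a) /\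
    (forall x : T, x != a -> forall h, h \in <[g]> -> h x = x -> h = 1%g).

From mathcomp Require Import all_boot all_fingroup all_solvable.
Set Implicit Arguments. Unset Strict Implicit. Unset Printing Implicit Defensive.
Local Open Scope group_scope.

(* A p-group acting with a unique fixed point alpha forces #|T| = 1 mod p,
   so the point stabiliser H = G_alpha has index prime to p and its Sylow
   p-subgroups are Sylow in G.  A Sylow p-subgroup S of H contains an
   H-conjugate of the quasi-semiregular element, hence has alpha as its only
   fixed point; N_G(S) permutes the fixed points of S, so it fixes alpha. *)

Section UniqueFixedPoint.

Variables (aT : finGroupType) (T : finType) (to : {action aT &-> T}).

Lemma card_mod_unique_afix (p : nat) (P : {group aT}) a :
  p.-group P -> 'Fix_to(P) = [set a] -> #|T| = 1 %[mod p].
Proof.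
move=> pP fixP.
have actsT : [acts P, on [set: T] | to] by apply/actsP => b _ x; rewrite !inE.
by rewrite -cardsT (pgroup_fix_mod pP actsT) setTI fixP cards1.
Qed.

Lemma p'nat_card_unique_afix (p : nat) (P : {group aT}) a :
  prime p -> p.-group P -> 'Fix_to(P) = [set a] -> p^'.-nat #|T|.
Proof.
move=> pr_p pP fixP; rewrite p'natE //; apply/negP => /dvdnP[m cardT].
have := card_mod_unique_afix pP fixP.
by rewrite cardT modnMl modn_small ?prime_gt1.
Qed.

Lemma norm_sub_astab1_unique_afix (A : {set aT}) x :
  'Fix_to(A) = [set x] -> 'N(A) \subset 'C[x | to].
Proof.
move=> fixA; apply/subsetP => n nAn; apply/astab1P/set1P.
have /actsP actsN := acts_fix_norm to (subxx 'N(A)).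
by rewrite -fixA actsN // fixA set11.
Qed.

Lemma index_astab1_transitive (G : {group aT}) x :
  [transitive G, on [set: T] | to] -> #|G : 'C_G[x | to]| = #|T|.
Proof. by move=> trG; rewrite -card_orbit (atransP trG x (in_setT x)) cardsT. Qed.

Lemma Sylow_astab1_norm_sub (p : nat) (G P S : {group aT}) x :
    P \subset 'C_G[x | to] -> p.-group P -> 'Fix_to(P) = [set x] ->
  p.-Sylow('C_G[x | to]) S -> 'N_G(S) \subset 'C_G[x | to].
Proof.
set H := 'C_G[x | to] => sPH pP fixP sylS.
have [h hH sPSh] := Sylow_subJ sylS sPH pP.
have hx : h \in 'C[x | to] by case/setIP: hH.
have fixSh : 'Fix_to(S :^ h) = [set x].
  have xSh : x \in 'Fix_to(S :^ h).
    by rewrite -sub_astab1 -(conjGid hx) conjSg (subset_trans (pHall_sub sylS)) ?subsetIr.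
  by apply/eqP; rewrite eqEsubset sub1set xSh andbT -fixP afixS.
have nSx : 'N(S) \subset 'C[x | to].
  by rewrite -(conjSg _ _ h) -normJ (conjGid hx) norm_sub_astab1_unique_afix.
by rewrite subsetI subsetIl (subset_trans (subsetIr _ _) nSx).
Qed.

End UniqueFixedPoint.

Lemma quasi_semiregular_afix (T : finType) (g : {perm T}) x :
  quasi_semiregular g -> g x = x -> 'Fix_('P)(<[g]>) = [set x].
Proof.
case=> a [fixa _] gx.
have fixE : 'Fix_('P)(<[g]>) = [set a].
  by apply/setP => y; rewrite inE; apply/afixP/eqP => /fixa.
suff xa : x = a by rewrite xa.
by apply/set1P; rewrite -fixE afix_cycle; apply/afix1P.
Qed.

Lemma pHall_p'index (gT : finGroupType) pi (G K H : {group gT}) :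
  K \subset G -> pi^'.-nat #|G : K| -> pi.-Hall(K) H -> pi.-Hall(G) H.
Proof.
move=> sKG pi'GK /and3P[sHK piH pi'KH]; apply/and3P; split => //.
  exact: subset_trans sKG.
by rewrite -(Lagrange_index sKG sHK) pnatM pi'GK.
Qed.

Theorem lemma2p3 (T : finType) (G : {group {perm T}}) (p : nat) (alpha : T) :
  prime p ->
  [transitive G, on [set: T] | 'P] ->
  (exists2 g, g \in 'C_G[alpha | 'P] & p.-elt g /\ quasi_semiregular g) ->
  [/\ (exists S : {group {perm T}}, p.-Sylow(G) S /\ S \subset 'C_G[alpha | 'P]),
      (forall S : {group {perm T}}, p.-Sylow(G) S -> S \subset 'C_G[alpha | 'P] ->
          'N_G(S) \subset 'N_G('C_G[alpha | 'P]))
    & (forall S : {group {perm T}}, p.-Sylow(G) S -> S \subset 'C_G[alpha | 'P] ->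
          'N_G('C_G[alpha | 'P]) = 'C_G[alpha | 'P] ->
          'N_G(S) = 'N_('C_G[alpha | 'P])(S))%g].
Proof.
move=> pr_p trG [g gH [pg qsr_g]].
set H := 'C_G[alpha | 'P].
have sHG : H \subset G := subsetIl _ _.
have sgH : <[g]> \subset H by rewrite cycle_subG.
have fixg : 'Fix_('P)(<[g]>) = [set alpha].
  by apply: quasi_semiregular_afix; case/setIP: gH => _ /astab1P.
have p'GH : p^'.-nat #|G : H|.
  by rewrite index_astab1_transitive //; exact: p'nat_card_unique_afix pr_p pg fixg.
have nSH (S : {group {perm T}}) : p.-Sylow(G) S -> S \subset H -> 'N_G(S) \subset H.
  by move=> sylS sSH; apply: Sylow_astab1_norm_sub sgH pg fixg (pHall_subl sSH sHG sylS).
split.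
- have [S sylS] := Sylow_exists p H.
  by exists S; split; [exact: pHall_p'index sHG p'GH sylS | apply: pHall_sub sylS].
- move=> S sylS sSH; rewrite subsetI subsetIl.
  exact: subset_trans (nSH S sylS sSH) (normG H).
- move=> S sylS sSH _; apply/eqP; rewrite eqEsubset subsetI nSH ?subsetIr //.
  by rewrite setSI.
Qed.
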